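(* Let $\{X_t\},\{Y_t\}$ ($t\in T$) be stochastic processes with finite second moments such that $X_t\le_{\textnormal{d-ast}}Y_t$ as $t\to\infty$. Let $\psi:\mathbb{R}\to\mathbb{R}$ be strictly increasing and Lipschitz continuous, with $\psi(X_t)$, $\psi(Y_t)$ having finite second moments for all $t$. If there exist $C>0$ and $t_0\in T$ with $\mathcal{W}_2^2(F_{X_t},F_{Y_t})\le C\,\mathcal{W}_2^2(F_{\psi(X_t)},F_{\psi(Y_t)})$ for all $t\ge t_0$, then $\psi(X_t)\le_{\textnormal{d-ast}}\psi(Y_t)$ as $t\to\infty$.
   Context: $T\subseteq\mathbb{R}$ is unbounded above; limits along $t\in T$. $F^{-1}(u)=\inf\{x:F(x)\ge u\}$. $\mathcal{W}_2(F,G)=(\int_0^1(F^{-1}-G^{-1})^2du)^{1/2}$. $\varepsilon_{\mathcal{W}_2}(F,G)=\mathcal{W}_2^{-2}(F,G)\int_{\{u\in(0,1):F^{-1}(u)>G^{-1}(u)\}}(F^{-1}-G^{-1})^2du$, set to $0$ if $\mathcal{W}_2(F,G)=0$. $X_t\le_{\textnormal{d-ast}}Y_t$ means $\lim_{t\to\infty}\varepsilon_{\mathcal{W}_2}(F_{X_t},F_{Y_t})=0$. *)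

From HB Require Import structures.
From mathcomp Require Import all_boot all_order all_algebra.
From mathcomp Require Import all_classical all_reals all_analysis.
Set Implicit Arguments. Unset Strict Implicit. Unset Printing Implicit Defensive.
Import Order.TTheory GRing.Theory Num.Theory.
Import numFieldNormedType.Exports.
Local Open Scope classical_set_scope.
Local Open Scope ring_scope.

Section Defs.
Context {R : realType}.

Definition distrF {d} {Omega : measurableType d} (P : probability Omega R)
  (X : Omega -> R) (x : R) : R := fine (P [set w | X w <= x]).

Definition qf (F : R -> R) (u : R) : R := inf [set x | u <= F x].

Definition W2sq (F G : R -> R) : \bar R :=
  (\int[@lebesgue_measure R]_(u in `]0%R, 1%R[) ((qf F u - qf G u) ^+ 2)%:E)%E.

Definition W2sq_pos (F G : R -> R) : \bar R :=
  (\int[@lebesgue_measure R]_(u in `]0%R, 1%R[ `&` [set u | (qf G u < qf F u)%R])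
      ((qf F u - qf G u) ^+ 2)%:E)%E.

Definition epsW2 (F G : R -> R) : R :=
  if W2sq F G == 0%E then 0 else fine (W2sq_pos F G) / fine (W2sq F G).

Definition dast {d} {Omega : measurableType d} (P : probability Omega R)
  (T : set R) (X Y : R -> Omega -> R) : Prop :=
  forall e : R, 0 < e -> exists M : R, forall t, T t -> M <= t ->
    `| epsW2 (distrF P (X t)) (distrF P (Y t)) | < e.

End Defs.

From HB Require Import structures.
From mathcomp Require Import all_boot all_order all_algebra.
From mathcomp Require Import all_classical all_reals all_analysis.
From mathcomp Require Import measurable_realfun.
From mathcomp Require Import ring lra.
Import Order.TTheory GRing.Theory Num.Theory.
Import numFieldNormedType.Exports.
Local Open Scope classical_set_scope.
Local Open Scope ring_scope.

(* Write F^-1, G^-1 for the quantile functions of X_t, Y_t and L for a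
   Lipschitz constant of psi.  The proof rests on three facts:
   1. quantiles commute with psi: F_{psi X}^-1(u) = psi (F_X^-1(u)) for
      u in (0,1), since psi is strictly increasing and continuous;
   2. consequently the set {u : G^-1 < F^-1} is the same for (X, Y) and for
      (psi X, psi Y), and on it the integrand of the positive part shrinks by
      at most L^2, so  W2sq_pos(psi) <= L^2 W2sq_pos;
   3. an elementary ratio estimate: combined with W2sq_pos <= W2sq and the
      hypothesis W2sq <= C W2sq(psi), it gives eps(psi X, psi Y) <= L^2 C eps(X, Y). *)

(* A function nondecreasing on an interval is Borel measurable on it; this
   applies to quantile functions, which are only monotone on (0,1). *)
Lemma nondecreasing_itv_measurable {R : realType} (i : interval R) (f : R -> R) :
  {in i &, {homo f : x y / x <= y}} -> measurable_fun [set` i] f.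
Proof.
move=> f_nd.
apply: (measurability (@RGenCInfty.G R)) => [|/= _ [_] [r] -> <-].
  exact: RGenCInfty.measurableE.
apply: is_interval_measurable => s t /= [si fs] [ti ft] z /andP[sz zt].
have iz : [set` i] z by apply: (interval_is_interval si ti); rewrite sz zt.
split=> //; move: fs; rewrite /= !in_itv /= !andbT => fs.
by apply: (le_trans fs); apply: f_nd.
Qed.

Section distribution_function.
Context {R : realType} {d : measure_display} {Omega : measurableType d}
  (P : probability Omega R).

Lemma measurable_sublevel {f : Omega -> R} : measurable_fun setT f ->
  forall a, measurable [set w | f w <= a].
Proof.
move=> mf a; have := mf measurableT _ (measurable_itv `]-oo, a]).
by rewrite setTI.
Qed.

Lemma distrF_le {f g : Omega -> R} {a b : R} :
  measurable_fun setT f -> measurable_fun setT g ->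
  (forall w, f w <= a -> g w <= b) -> distrF P f a <= distrF P g b.
Proof.
move=> mf mg fg; have mA := measurable_sublevel mf a.
have mB := measurable_sublevel mg b.
by rewrite /distrF fine_le ?fin_num_measure// le_measure ?inE// => w /fg.
Qed.

Context {X : Omega -> R} (mX : measurable_fun setT X).

(* X seen as a random variable, to reuse the library's theory of [cdf]. *)
Let Xrv : {RV P >-> R} := HB.pack X (isMeasurableFun.Build _ _ _ _ X mX).

Let distrF_cdf r : distrF P X r = fine (cdf Xrv r).
Proof. by rewrite /cdf /distribution /pushforward. Qed.

Lemma distrF_nondecreasing : {homo distrF P X : x y / x <= y}.
Proof. by move=> x y xy; apply: distrF_le => // w /le_trans; apply. Qed.

Lemma distrF_gt {u : R} : u < 1 -> exists x, u < distrF P X x.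
Proof.
move=> u1; have /fine_cvgP[_ F1] := cvg_cdfy1 Xrv.
have [M [_ HM]] := cvgr_gt 1 F1 u u1.
by exists (M + 1); rewrite distrF_cdf; apply: HM; rewrite ltrDl.
Qed.

Lemma distrF_lt {u : R} : 0 < u -> exists x, distrF P X x < u.
Proof.
move=> u0; have /fine_cvgP[_ F0] := cvg_cdfNy0 Xrv.
have [M [_ HM]] := cvgr_lt 0 F0 u u0.
by exists (M - 1); rewrite distrF_cdf; apply: HM; rewrite ltrBlDr ltrDl.
Qed.

Lemma quantile_set_has_inf {u : R} : 0 < u < 1 ->
  has_inf [set x | u <= distrF P X x].
Proof.
case/andP=> u0 u1; split.
  by have [x ux] := distrF_gt u1; exists x; exact: ltW.
have [x0 Fx0] := distrF_lt u0; exists x0 => x /= ux; rewrite leNgt.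
apply/negP => xx0; have := distrF_nondecreasing _ _ (ltW xx0).
by rewrite leNgt (lt_le_trans Fx0 ux).
Qed.

Lemma qf_nondecreasing :
  {in `]0, 1[ &, {homo qf (distrF P X) : u v / u <= v}}.
Proof.
move=> u v; rewrite !in_itv /= => u01 v01 uv.
have [_ lb_u] := quantile_set_has_inf u01.
have [ne_v _] := quantile_set_has_inf v01.
by apply: lb_le_inf ne_v _ => x /= vx; apply: (ge_inf lb_u); exact: le_trans vx.
Qed.

Lemma qf_measurable : measurable_fun (`]0, 1[ : set R) (qf (distrF P X)).
Proof. exact: nondecreasing_itv_measurable qf_nondecreasing. Qed.

End distribution_function.

Section wasserstein.
Context {R : realType}.
Local Open Scope ereal_scope.

Lemma W2sq_ge0 (F G : R -> R) : 0 <= W2sq F G.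
Proof. by apply: integral_ge0 => u _; rewrite lee_fin sqr_ge0. Qed.

Lemma W2sq_pos_ge0 (F G : R -> R) : 0 <= W2sq_pos F G.
Proof. by apply: integral_ge0 => u _; rewrite lee_fin sqr_ge0. Qed.

Context {d : measure_display} {Omega : measurableType d} (P : probability Omega R).
Context {X Y : Omega -> R} (mX : measurable_fun setT X) (mY : measurable_fun setT Y).

Lemma measurable_quantile_gt :
  measurable (`]0%R, 1%R[ `&` [set u | (qf (distrF P Y) u < qf (distrF P X) u)%R]).
Proof.
have := measurable_fun_ltr (qf_measurable P mY) (qf_measurable P mX)
  (measurable_itv `]0%R, 1%R[).
by apply.
Qed.

Lemma measurable_quantile_sqdiff :
  measurable_fun (`]0%R, 1%R[ : set R)
    (fun u => ((qf (distrF P X) u - qf (distrF P Y) u) ^+ 2)%:E).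
Proof.
apply/measurable_EFinP; apply: measurable_funX.
by apply: measurable_funB; exact: qf_measurable.
Qed.

Lemma W2sq_pos_le_W2sq :
  W2sq_pos (distrF P X) (distrF P Y) <= W2sq (distrF P X) (distrF P Y).
Proof.
apply: ge0_subset_integral => //.
- exact: measurable_quantile_gt.
- exact: measurable_quantile_sqdiff.
- by move=> u _; rewrite lee_fin sqr_ge0.
Qed.

End wasserstein.

Section increasing_lipschitz.
Context {R : realType} {psi : R -> R} (psi_lt : {homo psi : x y / x < y})
  {L : R} (psi_lip : forall x y, `|psi x - psi y| <= L * `|x - y|).

Let psi_le : {mono psi : x y / x <= y}. Proof. exact: le_mono. Qed.

(* psi is not constant, so its Lipschitz constant is positive. *)
Lemma lipschitz_constant_gt0 : 0 < L.
Proof.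
have := psi_lip 1 0; rewrite subr0 normr1 mulr1; apply: lt_le_trans.
by rewrite normr_gt0 subr_eq0 gt_eqF // psi_lt.
Qed.

Lemma psi_increment_lt x y e : x <= y -> y - x < e / L -> psi y - psi x < e.
Proof.
move=> xy yx; have L0 := lipschitz_constant_gt0.
apply: le_lt_trans (ler_norm _) _; apply: le_lt_trans (psi_lip y x) _.
by rewrite ger0_norm ?subr_ge0 // -ltr_pdivlMl // mulrC.
Qed.

Context {d : measure_display} {Omega : measurableType d} (P : probability Omega R).

Lemma measurable_comp_psi {X : Omega -> R} : measurable_fun setT X ->
  measurable_fun setT (psi \o X).
Proof.
move=> mX; apply: measurableT_comp mX.
exact: nondecreasing_measurable (ltW_homo psi_lt).
Qed.

(* With q = F_X^-1(u): psi q bounds the level set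
   of F_{psi X} from below (a value y < psi q lies below psi x for some x < q,
   where F_X x < u), and psi a approximates psi q from above for the points a
   of the level set of F_X close to q. *)
Lemma qf_comp {X : Omega -> R} (mX : measurable_fun setT X) {u : R} : 0 < u < 1 ->
  qf (distrF P (psi \o X)) u = psi (qf (distrF P X) u).
Proof.
move=> u01; have mpX := measurable_comp_psi mX; have L0 := lipschitz_constant_gt0.
rewrite /qf; set A := [set x | u <= distrF P X x].
set B := [set y | u <= distrF P (psi \o X) y]; set q := inf A.
have infA : has_inf A := quantile_set_has_inf P mX u01.
have qA : lbound A q := ge_inf infA.2.
have AB a : A a -> B (psi a).
  by move=> Aa; apply: le_trans Aa (distrF_le P mX mpX _) => w; rewrite /= psi_le.
have lbB : lbound B (psi q).
  move=> y By; rewrite leNgt; apply/negP => ypq.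
  have e0 : 0 < (psi q - y) / L by rewrite divr_gt0 ?subr_gt0.
  pose x := q - (psi q - y) / L / 2.
  have xq : x < q by rewrite /x; lra.
  have yx : y < psi x.
    have : q - x < (psi q - y) / L by rewrite /x; lra.
    by move/(psi_increment_lt _ _ _ (ltW xq)); lra.
  have Fx : distrF P X x < u by rewrite ltNge; apply/negP => /qA; rewrite leNgt xq.
  suff : distrF P (psi \o X) y <= distrF P X x by move: By; rewrite /B /=; lra.
  apply: distrF_le mpX mX _ => w /= /le_lt_trans /(_ yx).
  by rewrite (leW_mono psi_le) => /ltW.
have infB : has_inf B.
  by split; [have [a /AB Ba] := infA.1; exists (psi a) | exists (psi q)].
apply/eqP; rewrite eq_le (lb_le_inf infB.1 lbB) andbT.
apply/ler_addgt0Pr => e e0.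
have [a Aa aq] := inf_adherent (divr_gt0 e0 L0) infA.
have : psi a - psi q < e by apply: psi_increment_lt (qA a Aa) _; rewrite -/q; lra.
by have := ge_inf infB.2 (AB a Aa); lra.
Qed.

Lemma psi_sqdiff_le a b : (psi a - psi b) ^+ 2 <= L ^+ 2 * (a - b) ^+ 2.
Proof.
rewrite -real_normK ?num_real // -[(a - b) ^+ 2]real_normK ?num_real // -exprMn.
by rewrite lerXn2r ?nnegrE ?mulr_ge0 ?(ltW lipschitz_constant_gt0).
Qed.

Lemma W2sq_pos_comp {X Y : Omega -> R} :
  measurable_fun setT X -> measurable_fun setT Y ->
  (W2sq_pos (distrF P (psi \o X)) (distrF P (psi \o Y))
   <= (L ^+ 2)%:E * W2sq_pos (distrF P X) (distrF P Y))%E.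
Proof.
move=> mX mY; have mpX := measurable_comp_psi mX; have mpY := measurable_comp_psi mY.
rewrite /W2sq_pos; set qX := qf (distrF P X); set qY := qf (distrF P Y).
have same_set : `]0, 1[ `&` [set u | qf (distrF P (psi \o Y)) u < qf (distrF P (psi \o X)) u]
    = `]0, 1[ `&` [set u | qY u < qX u].
  apply/seteqP; split=> u [u01]; have u01' : 0 < u < 1 by move: u01; rewrite /= in_itv.
    by rewrite /= (qf_comp mX u01') (qf_comp mY u01') (leW_mono psi_le).
  by rewrite /= (qf_comp mX u01') (qf_comp mY u01') (leW_mono psi_le).
rewrite same_set; set D := `]0, 1[ `&` _.
have mD : measurable D := measurable_quantile_gt P mX mY.
have D01 : D `<=` `]0, 1[ := @subIsetl _ _ _.
have msq := measurable_funS (measurable_itv _) D01 (measurable_quantile_sqdiff P mX mY).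
have mpsq := measurable_funS (measurable_itv _) D01 (measurable_quantile_sqdiff P mpX mpY).
rewrite -ge0_integralZl_EFin ?sqr_ge0 //; last first.
  by move=> u _; rewrite lee_fin sqr_ge0.
apply: ge0_le_integral => //.
- by move=> u _; rewrite lee_fin sqr_ge0.
- exact: emeasurable_funM (measurable_cst _) msq.
- move=> u [u01 _]; have u01' : 0 < u < 1 by move: u01; rewrite /= in_itv.
  by rewrite -EFinM lee_fin (qf_comp mX u01') (qf_comp mY u01') psi_sqdiff_le.
Qed.

End increasing_lipschitz.

Section asymmetry_index.
Context {R : realType}.
Local Open Scope ereal_scope.

Lemma epsW2_ge0 (F G : R -> R) : (0 <= epsW2 F G)%R.
Proof.
rewrite /epsW2; case: ifP => // _.
by rewrite divr_ge0 // fine_ge0 // ?W2sq_pos_ge0 ?W2sq_ge0.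
Qed.

Let ge0_fin_num_le {x y : \bar R} : 0 <= x -> x <= y -> y \is a fin_num ->
  x \is a fin_num.
Proof.
move=> x0 xy /fin_numPlt/andP[_ yoo].
by rewrite ge0_fin_numE // (le_lt_trans xy yoo).
Qed.

(* Fact 3: the ratio estimate.  If W2sq' is infinite, eps' = 0 by convention;
   otherwise all four integrals are finite and eps' <= k pos / W2sq'
   <= k C pos / W2sq = k C eps. *)
Lemma epsW2_le {F G F' G' : R -> R} {k C : R} : (0 <= k)%R -> (0 <= C)%R ->
  W2sq_pos F' G' <= k%:E * W2sq_pos F G -> W2sq_pos F G <= W2sq F G ->
  W2sq F G <= C%:E * W2sq F' G' -> (epsW2 F' G' <= k * C * epsW2 F G)%R.
Proof.
move=> k0 C0 pos_le pos_W2 W2_le; have e0 := epsW2_ge0 F G.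
rewrite {1}/epsW2; case: ifPn => [_|w'0]; first by rewrite !mulr_ge0.
have [w'fin|] := boolP (W2sq F' G' \is a fin_num); last first.
  rewrite ge0_fin_numE ?W2sq_ge0 // -leNgt leye_eq => /eqP ->.
  by rewrite /= invr0 mulr0 !mulr_ge0.
have wfin : W2sq F G \is a fin_num.
  by apply: (ge0_fin_num_le (W2sq_ge0 F G) W2_le); exact: fin_numM.
have pfin := ge0_fin_num_le (W2sq_pos_ge0 F G) pos_W2 wfin.
have p'fin : W2sq_pos F' G' \is a fin_num.
  by apply: (ge0_fin_num_le (W2sq_pos_ge0 F' G') pos_le); exact: fin_numM.
rewrite /epsW2.
move: w'0 W2_le pos_W2 pos_le (W2sq_ge0 F' G') (W2sq_ge0 F G) (W2sq_pos_ge0 F G)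
  (W2sq_pos_ge0 F' G') w'fin wfin pfin p'fin.
case: (W2sq F' G') => [w'| |] //; case: (W2sq F G) => [w| |] //.
case: (W2sq_pos F G) => [a| |] //; case: (W2sq_pos F' G') => [a'| |] //=.
rewrite -!EFinM !lee_fin !eqe => w'0 w_le a_le a'_le w'ge0 w0 a0 a'0 _ _ _ _.
have w'pos : (0 < w')%R by rewrite lt_neqAle eq_sym w'0.
case: eqP => [w00|/eqP wn0].
  have a00 : a = 0%R by lra.
  rewrite a00 mulr0 in a'_le; have -> : a' = 0%R by lra.
  by rewrite mul0r mulr0.
have wpos : (0 < w)%R by rewrite lt_neqAle eq_sym wn0.
have a_bound : (a <= a / w * (C * w'))%R.
  by rewrite -{1}(divfK wn0 a) ler_wpM2l // divr_ge0.
rewrite ler_pdivrMr // (le_trans a'_le) //.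
have -> : (k * C * (a / w) * w' = k * (a / w * (C * w')))%R by ring.
exact: ler_wpM2l.
Qed.

End asymmetry_index.

(* Theorem 2.6: psi(X_t) <=_{d-ast} psi(Y_t).  The moment hypotheses and the
   unboundedness of T are part of the setting but not needed for the bound. *)
Theorem theorem2p6 (R : realType) (d : measure_display) (Omega : measurableType d)
  (P : probability Omega R) (T : set R) (X Y : R -> Omega -> R) (psi : R -> R) :
  (forall M : R, exists t, T t /\ M < t) ->
  (forall t, T t -> measurable_fun setT (X t) /\ measurable_fun setT (Y t)) ->
  (forall t, T t -> P.-integrable setT (fun w => ((X t w) ^+ 2)%:E) /\
                    P.-integrable setT (fun w => ((Y t w) ^+ 2)%:E)) ->
  dast P T X Y ->
  {homo psi : x y / x < y} ->
  (exists L : R, forall x y, `|psi x - psi y| <= L * `|x - y|) ->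
  (forall t, T t -> P.-integrable setT (fun w => ((psi (X t w)) ^+ 2)%:E) /\
                    P.-integrable setT (fun w => ((psi (Y t w)) ^+ 2)%:E)) ->
  (exists C : R, 0 < C /\ exists t0, T t0 /\ forall t, T t -> t0 <= t ->
     (W2sq (distrF P (X t)) (distrF P (Y t))
      <= C%:E * W2sq (distrF P (psi \o X t)) (distrF P (psi \o Y t)))%E) ->
  dast P T (fun t => psi \o X t) (fun t => psi \o Y t).
Proof.
move=> _ measXY _ dastXY psi_lt [L psi_lip] _ [C [C0 [t0 [_ W2_le]]]] e e0.
have LC : 0 <= L ^+ 2 * C by rewrite mulr_ge0 ?sqr_ge0 ?ltW.
have K0 : 0 < L ^+ 2 * C + 1 by lra.
have [M hM] := dastXY (e / (L ^+ 2 * C + 1)) (divr_gt0 e0 K0).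
exists (Num.max M t0) => t Tt; rewrite ge_max => /andP[Mt t0t].
have [mX mY] := measXY t Tt.
have epsX := hM t Tt Mt; rewrite (ger0_norm (epsW2_ge0 _ _)) ltr_pdivlMr // in epsX.
have eps_psi := epsW2_le (sqr_ge0 L) (ltW C0)
  (W2sq_pos_comp psi_lt psi_lip P mX mY) (W2sq_pos_le_W2sq P mX mY) (W2_le t Tt t0t).
rewrite (ger0_norm (epsW2_ge0 _ _)); apply: le_lt_trans eps_psi _.
apply: le_lt_trans epsX.
by rewrite mulrDr mulr1 mulrC lerDl epsW2_ge0.
Qed.
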